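(* Let $\mathcal{L}$ be the liability sheaf on $\mathcal{H}_G$ of a liability network $N=(G,X,\lambda,\iota;\delta,\hat\alpha)$ valued in $\mathbf{DCPO}$, $G=(V,E,s,t)$, with each payment object $X_v$ a complete lattice object. Let $\mathcal{G}_P=\mathrm{Hom}(1,P)$ for $P=\prod_vX_v$, with bottom $\bot$ and top $\top$, let $\Phi_*$ be the action of the clearing operator on $\mathcal{G}_P$, and let $\mathbf{x}_{\min},\mathbf{x}_{\max}\in\mathcal{G}_P$ be the institution-coordinate projections of the least and greatest clearing sections (least and greatest elements of $\Gamma(\mathcal{H}_G;\mathcal{L})$ in the pointwise order on institution components). Then $\Phi_*$ is Scott-continuous and $\mathbf{x}_{\min}=\sup_{n\ge0}\Phi_*^n(\bot)$. If in addition $\Phi_*$ preserves filtered infima — as it does whenever each $X_v$ has finite height, or $\mathcal{G}_P$ is a finite product of compact real intervals on which the $\delta_e,\alpha_v$ are continuous in the Euclidean topology — then $\mathbf{x}_{\max}=\inf_{n\ge0}\Phi_*^n(\top)$.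
   Context: $\mathbf{DCPO}$ is the category of directed-complete partial orders and Scott-continuous maps, regarded as a liability category: the terminal object is the one-point dcpo, $\mathrm{Hom}(1,P)=P$ with its order, products are componentwise, constraint subobjects are Scott-closed downsets, and the bound selector sends $\rho\in P$ to the principal ideal $\downarrow\rho=\{x\in P:x\leqslant\rho\}$. An object is a complete lattice object if its underlying poset is a complete lattice. A liability network in $\mathbf{DCPO}$: finite directed graph $G=(V,E,s,t)$, payment objects $X_v$, liability elements $\lambda_e\in X_{s(e)}$, exogenous resources $\iota_v\in X_v$, Scott-continuous distributors $\delta_e:X_{s(e)}\to X_{s(e)}^{\lambda_e}:=\downarrow\lambda_e$, Scott-continuous aggregators $\hat\alpha_v:X_v\times\prod_{t(e)=v}X_{s(e)}^{\lambda_e}\to X_v$, and partial aggregators $\alpha_v((p_e))=\hat\alpha_v(\iota_v,(p_e))$ (empty products are the one-point dcpo). The clearing operator is $\Phi:P\to P$, $\Phi(\mathbf{x})_v=\alpha_v((\delta_e(x_{s(e)}))_{t(e)=v})$, and $\Phi_*$ is its action on global elements. The liability hypergraph $\mathcal{H}_G$ has vertices $V\sqcup\{e^*\}$ and hyperedges $h_v^\delta$ (source $\{v\}$, target $\{e^*:s(e)=v\}$), $h_v^\alpha$ (empty source, target $\{e^*:t(e)=v\}\cup\{v\}$); its incidence category has one arrow $h\to w$ per incidence and no composites. The liability sheaf has stalks $X_v$ at $v,h_v^\delta$; $X_{s(e)}^{\lambda_e}$ at $e^*$; $\prod_{t(e)=v}X_{s(e)}^{\lambda_e}$ at $h_v^\alpha$;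 restrictions $\mathrm{id},\delta_e,\pi_e,\alpha_v$. Global sections $\Gamma(\mathcal{H}_G;\mathcal{L})$ are the global elements of the limit of this diagram; they correspond to families $(x_v,p_e)$ with $p_e=\delta_e(x_{s(e)})$ and $x_v=\alpha_v((p_e)_{t(e)=v})$, i.e. to fixed points of $\Phi_*$; clearing sections means global sections. *)

From mathcomp Require Import all_boot.
From Stdlib Require Import Reals.


Definition partial_order {T : Type} (le : T -> T -> Prop) : Prop :=
  (forall x, le x x) /\
  (forall x y, le x y -> le y x -> x = y) /\
  (forall x y z, le x y -> le y z -> le x z).

Definition directed {T : Type} (le : T -> T -> Prop) (D : T -> Prop) : Prop :=
  (exists x, D x) /\
  (forall x y, D x -> D y -> exists z, D z /\ le x z /\ le y z).

Definition filtered {T : Type} (le : T -> T -> Prop) (D : T -> Prop) : Prop :=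
  (exists x, D x) /\
  (forall x y, D x -> D y -> exists z, D z /\ le z x /\ le z y).

Definition is_sup {T : Type} (le : T -> T -> Prop) (D : T -> Prop) (s : T) : Prop :=
  (forall x, D x -> le x s) /\
  (forall u, (forall x, D x -> le x u) -> le s u).

Definition is_inf {T : Type} (le : T -> T -> Prop) (D : T -> Prop) (s : T) : Prop :=
  (forall x, D x -> le s x) /\
  (forall l, (forall x, D x -> le l x) -> le l s).

Definition img {A B : Type} (f : A -> B) (D : A -> Prop) : B -> Prop :=
  fun y => exists x, D x /\ y = f x.

Definition dcpo {T : Type} (le : T -> T -> Prop) : Prop :=
  partial_order le /\ (forall D, directed le D -> exists s, is_sup le D s).

Definition complete_lattice {T : Type} (le : T -> T -> Prop) : Prop :=
  partial_order le /\ (forall D : T -> Prop, exists s, is_sup le D s).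

Definition scott_continuous {A B : Type} (leA : A -> A -> Prop)
  (leB : B -> B -> Prop) (f : A -> B) : Prop :=
  forall D s, directed leA D -> is_sup leA D s -> is_sup leB (img f D) (f s).

Definition preserves_filtered_infs {A B : Type} (leA : A -> A -> Prop)
  (leB : B -> B -> Prop) (f : A -> B) : Prop :=
  forall D s, filtered leA D -> is_inf leA D s -> is_inf leB (img f D) (f s).

Definition finite_height {T : Type} (le : T -> T -> Prop) : Prop :=
  exists h : nat, forall (c : nat -> T) (n : nat),
    (forall i, (i < n)%N -> le (c i) (c i.+1) /\ c i <> c i.+1) -> (n <= h)%N.

Definition downset {T : Type} (le : T -> T -> Prop) (l : T) : Type :=
  {x : T | le x l}.

Definition sub_le {T : Type} (le : T -> T -> Prop) (l : T) :
  downset le l -> downset le l -> Prop :=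
  fun x y => le (proj1_sig x) (proj1_sig y).

Definition pi_le {I : Type} {F : I -> Type} (le : forall i, F i -> F i -> Prop) :
  (forall i, F i) -> (forall i, F i) -> Prop :=
  fun f g => forall i, le i (f i) (g i).

Definition pair_le {A B : Type} (leA : A -> A -> Prop) (leB : B -> B -> Prop) :
  A * B -> A * B -> Prop :=
  fun p q => leA p.1 q.1 /\ leB p.2 q.2.

Record network := Network {
  V : finType;
  E : finType;
  src : E -> V;
  tgt : E -> V;
  X : V -> Type;
  leX : forall v, X v -> X v -> Prop;
  X_dcpo : forall v, dcpo (leX v);
  lam : forall e, X (src e);
  iota : forall v, X v;
  delta : forall e, X (src e) -> downset (leX (src e)) (lam e);
  delta_sc : forall e,
    scott_continuous (leX (src e)) (sub_le (leX (src e)) (lam e)) (delta e);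
  ahat : forall v,
    X v * (forall e : {e : E | tgt e == v},
             downset (leX (src (proj1_sig e))) (lam (proj1_sig e))) -> X v;
  ahat_sc : forall v,
    scott_continuous
      (pair_le (leX v)
         (pi_le (fun e : {e : E | tgt e == v} =>
                   sub_le (leX (src (proj1_sig e))) (lam (proj1_sig e)))))
      (leX v) (ahat v)
}.

Section NetworkDefs.
Variable N : network.

(* incoming-liability product  prod_{t(e)=v} X_{s(e)}^{lambda_e} *)
Definition inprod (v : V N) : Type :=
  forall e : {e : E N | tgt N e == v},
    downset (leX N (src N (proj1_sig e))) (lam N (proj1_sig e)).

Definition alpha (v : V N) (p : inprod v) : X N v := ahat N v (iota N v, p).

(* P = prod_v X_v and its global elements with the product order *)
Definition PP : Type := forall v : V N, X N v.
Definition leGP : PP -> PP -> Prop := pi_le (leX N).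

Definition Phi (x : PP) : PP :=
  fun v => alpha v (fun e => delta N (proj1_sig e) (x (src N (proj1_sig e)))).

(* Global sections of the liability sheaf on the liability hypergraph:
   an element at every vertex v, e*, h_v^delta, h_v^alpha, compatible with
   every incidence restriction (id, delta_e, pi_e, alpha_v). *)
Definition is_global_section (xv : forall v, X N v)
  (pe : forall e, downset (leX N (src N e)) (lam N e))
  (hd : forall v, X N v) (ha : forall v, inprod v) : Prop :=
  (* h_v^delta -> v : id *)
  (forall v, hd v = xv v) /\
  (* h_{s(e)}^delta -> e* : delta_e *)
  (forall e, delta N e (hd (src N e)) = pe e) /\
  (* h_v^alpha -> e* (t(e) = v) : pi_e *)
  (forall v (e : {e : E N | tgt N e == v}), ha v e = pe (proj1_sig e)) /\
  (* h_v^alpha -> v : alpha_v *)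
  (forall v, alpha v (ha v) = xv v).

Definition clearing_projection (x : PP) : Prop :=
  exists pe hd ha, is_global_section x pe hd ha.

Definition is_least_clearing (x : PP) : Prop :=
  clearing_projection x /\ forall y, clearing_projection y -> leGP x y.

Definition is_greatest_clearing (x : PP) : Prop :=
  clearing_projection x /\ forall y, clearing_projection y -> leGP y x.

Definition iterates (x0 : PP) : PP -> Prop :=
  fun y => exists n : nat, y = iter n Phi x0.

Definition box_chart {T : Type} (le : T -> T -> Prop) (k : nat)
  (phi : T -> 'I_k -> R) (a b : 'I_k -> R) : Prop :=
  (forall x y, le x y <-> forall i, (phi x i <= phi y i)%R) /\
  (forall x i, (a i <= phi x i <= b i)%R) /\
  (forall z : 'I_k -> R, (forall i, (a i <= z i <= b i)%R) ->
     exists x, forall i, phi x i = z i).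

(* G_P is a finite product of compact real intervals, on which the
   delta_e and alpha_v are continuous in the Euclidean topology
   (sequential continuity, equivalent here since the spaces are metric). *)
Definition real_box_case : Prop :=
  exists (k : V N -> nat) (phi : forall v, X N v -> 'I_(k v) -> R)
         (a b : forall v, 'I_(k v) -> R),
    (forall v, box_chart (leX N v) (k v) (phi v) (a v) (b v)) /\
    (forall e (u : nat -> X N (src N e)) (x : X N (src N e)),
       (forall i, Un_cv (fun n => phi _ (u n) i) (phi _ x i)) ->
       forall j, Un_cv (fun n => phi _ (proj1_sig (delta N e (u n))) j)
                       (phi _ (proj1_sig (delta N e x)) j)) /\
    (forall v (u : nat -> inprod v) (p : inprod v),
       (forall (e : {e : E N | tgt N e == v}) i,
          Un_cv (fun n => phi _ (proj1_sig (u n e)) i) (phi _ (proj1_sig (p e)) i)) ->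
       forall j, Un_cv (fun n => phi v (alpha v (u n)) j) (phi v (alpha v p) j)).

End NetworkDefs.

(* Clearing sections are exactly the fixed points of the clearing operator
   Phi.  Phi is built from the distributors and aggregators by composition,
   tupling and projections, which all preserve directed suprema in products of
   complete lattices, so Phi is Scott-continuous and Kleene's theorem makes
   sup_n Phi^n(bot) its least fixed point; for the opposite order, the same
   argument gives inf_n Phi^n(top) once Phi preserves filtered infima.
   If every X_v has finite height, a filtered set of the finite product
   contains its infimum, which any monotone map then preserves.  In the box
   case, a point raised by eps in one coordinate above the infimum of a
   filtered set D would be a larger lower bound, so D contains a sequence
   converging to its infimum, and sequential continuity of delta and alpha
   carries the lower bounds of Phi(D) over to Phi(inf D). *)

From Pilot Require Import Defs.
From mathcomp Require Import all_boot.
From Stdlib Require Import Reals Lra.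
From Stdlib Require Import Classical ClassicalEpsilon FunctionalExtensionality.

(* Infima, filtered sets and preservation of filtered infima are, by conversion,
   suprema, directed sets and Scott continuity for [dual le]; all dual
   statements below are obtained this way. *)
Definition dual {T : Type} (le : T -> T -> Prop) : T -> T -> Prop :=
  fun x y => le y x.

Definition monotone {A B : Type} (leA : A -> A -> Prop) (leB : B -> B -> Prop)
  (f : A -> B) : Prop :=
  forall x y, leA x y -> leB (f x) (f y).

Section OrderBasics.
Context {T : Type} {le : T -> T -> Prop}.

Lemma is_sup_ext {D1 D2 : T -> Prop} {s : T} :
  is_sup le D1 s -> (forall x, D1 x <-> D2 x) -> is_sup le D2 s.
Proof.
move=> [ub least] eqD; split; first by move=> x /eqD; apply: ub.
by move=> u Hu; apply: least => x /eqD; apply: Hu.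
Qed.

Lemma is_sup_unique {D : T -> Prop} {s t : T} :
  partial_order le -> is_sup le D s -> is_sup le D t -> s = t.
Proof.
by move=> [_ [anti _]] [ubs lss] [ubt lst]; apply: anti; [apply: lss | apply: lst].
Qed.

Lemma dual_partial_order : partial_order le -> partial_order (dual le).
Proof.
move=> [refl [anti trans]]; split=> //; split=> [x y lexy leyx | x y z lexy leyz].
- exact: anti.
- exact: trans leyz lexy.
Qed.

Lemma complete_lattice_dual : complete_lattice le -> complete_lattice (dual le).
Proof.
move=> [po sups]; split; first exact: dual_partial_order.
move=> D; have [s [ub least]] := sups (fun l => forall x, D x -> le l x).
exists s; split=> [x Dx | l lbl]; last exact: ub.
by apply: least => l; apply.
Qed.

Lemma complete_lattice_dcpo : complete_lattice le -> dcpo le.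
Proof. by move=> [po sups]; split=> // D _; apply: sups. Qed.

Lemma directed_pair {x y : T} :
  (forall z, le z z) -> le x y -> directed le (fun z => z = x \/ z = y).
Proof.
move=> refl lexy; split; first by exists x; left.
move=> a b Ha Hb; exists y.
by split; [right | split; [case: Ha => -> | case: Hb => ->]].
Qed.

Lemma is_inf_img_min {B : Type} {leB : B -> B -> Prop} {f : T -> B} {D m s} :
  partial_order le -> monotone le leB f ->
  D m -> (forall x, D x -> le m x) -> is_inf le D s -> is_inf leB (img f D) (f s).
Proof.
move=> [_ [anti _]] f_mono Dm minm [lbs gls].
have -> : s = m by apply: anti; [apply: lbs | apply: gls].
split=> [_ [x [Dx ->]] | l lbl]; first by apply: f_mono; apply: minm.
by apply: lbl; exists m.
Qed.

End OrderBasics.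

Section ScottContinuity.
Context {T : Type} {le : T -> T -> Prop}.

Lemma scott_continuous_monotone {B : Type} {leB : B -> B -> Prop} {f : T -> B} :
  (forall x, le x x) -> scott_continuous le leB f -> monotone le leB f.
Proof.
move=> refl f_sc x y lexy.
have supxy : is_sup le (fun z => z = x \/ z = y) y.
  by split=> [z [->|->] // | u]; apply; right.
have [ub _] := f_sc _ _ (directed_pair refl lexy) supxy.
by apply: ub; exists x; split=> //; left.
Qed.

Lemma directed_img {B : Type} {leB : B -> B -> Prop} {f : T -> B} {D : T -> Prop} :
  monotone le leB f -> directed le D -> directed leB (img f D).
Proof.
move=> f_mono [[x0 Dx0] dirD]; split; first by exists (f x0), x0.
move=> _ _ [x [Dx ->]] [y [Dy ->]].
have [z [Dz [lexz leyz]]] := dirD _ _ Dx Dy.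
by exists (f z); split; [exists z | split; apply: f_mono].
Qed.

Lemma scott_continuous_comp {B C : Type} {leB : B -> B -> Prop}
    {leC : C -> C -> Prop} {f : T -> B} {g : B -> C} :
  (forall x, le x x) -> scott_continuous le leB f -> scott_continuous leB leC g ->
  scott_continuous le leC (fun x => g (f x)).
Proof.
move=> refl f_sc g_sc D s dirD supD.
have dirfD := directed_img (scott_continuous_monotone refl f_sc) dirD.
apply: (is_sup_ext (g_sc _ _ dirfD (f_sc _ _ dirD supD))) => c; split.
- by move=> [_ [[x [Dx ->]] ->]]; exists x.
- by move=> [x [Dx ->]]; exists (f x); split=> //; exists x.
Qed.

End ScottContinuity.

Section Kleene.
Context {T : Type} {le : T -> T -> Prop} {f : T -> T} {bot : T}.
Let iterates : T -> Prop := fun y => exists n, y = iter n f bot.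

Lemma iterates_directed :
  monotone le le f -> (forall x, le bot x) -> directed le iterates.
Proof.
move=> f_mono botP.
have chain n k : le (iter n f bot) (iter (n + k) f bot).
  by elim: n => [|n IH] //=; apply: f_mono.
split; first by exists bot, 0.
move=> _ _ [n ->] [m ->]; exists (iter (n + m) f bot).
by split; [exists (n + m) | split; [|rewrite addnC]; apply: chain].
Qed.

Lemma kleene_least_fixpoint {xmin : T} :
  dcpo le -> scott_continuous le le f -> (forall x, le bot x) ->
  f xmin = xmin -> (forall y, f y = y -> le xmin y) -> is_sup le iterates xmin.
Proof.
move=> [po dsups] f_sc botP fix_xmin least_xmin.
have [refl [_ trans]] := po.
have f_mono := scott_continuous_monotone refl f_sc.
have dirI := iterates_directed f_mono botP.
have [s [ubs lss] ] := dsups _ dirI.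
(* the image of the iterates is the iterates without [bot], so both have sup [s] *)
have supfI : is_sup le (img f iterates) s.
  split=> [_ [_ [[n ->] ->]] | u ubu]; first by apply: ubs; exists n.+1.
  apply: lss => _ [[|n] ->] //; apply: ubu; exists (iter n f bot).
  by split=> //; exists n.
have fix_s : f s = s.
  exact: is_sup_unique po (f_sc _ _ dirI (conj ubs lss)) supfI.
split=> [_ [n ->] | u ubu].
- by elim: n => [|n IH] //=; rewrite -fix_xmin; apply: f_mono.
- by apply: trans (least_xmin _ fix_s) _; apply: lss.
Qed.

End Kleene.

Section Filtered.
Context {T : Type} {le : T -> T -> Prop}.

Lemma filtered_exists_forall {I : finType} {D : T -> Prop} {P : I -> T -> Prop} :
  filtered le D -> (forall i x z, le z x -> P i x -> P i z) ->
  (forall i, exists x, D x /\ P i x) -> exists z, D z /\ forall i, P i z.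
Proof.
move=> [[x0 Dx0] filtD] P_down exP.
suff [z [Dz Pz]] : exists z, D z /\ forall i, i \in enum I -> P i z.
  by exists z; split=> // i; apply: Pz; rewrite mem_enum.
elim: (enum I) => [|i s [z1 [Dz1 Pz1]]]; first by exists x0.
have [x [Dx Pix]] := exP i.
have [z [Dz [lez1 lezx]]] := filtD _ _ Dz1 Dx.
exists z; split=> // j; rewrite in_cons => /orP[/eqP -> | js].
- exact: P_down lezx Pix.
- exact: P_down lez1 (Pz1 j js).
Qed.

Lemma filtered_strictly_below {D : T -> Prop} {m : T} :
  filtered le D -> D m -> ~ (forall x, D x -> le m x) ->
  exists z, D z /\ le z m /\ z <> m.
Proof.
move=> [_ filtD] Dm /not_all_ex_not[x /(imply_to_and (D x))[Dx not_lemx]].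
have [z [Dz [lezm lezx]]] := filtD _ _ Dm Dx.
by exists z; split=> //; split=> // eqzm; apply: not_lemx; rewrite -eqzm.
Qed.

Lemma finite_height_filtered_min {D : T -> Prop} :
  finite_height le -> filtered le D -> exists m, D m /\ forall x, D x -> le m x.
Proof.
move=> [h heightP] filtD; apply: NNPP => no_min.
have no_minD m : D m -> ~ (forall x, D x -> le m x).
  by move=> Dm minm; apply: no_min; exists m.
suff chains k m : D m -> exists c : nat -> T,
    c k = m /\ forall i, i < k -> le (c i) (c i.+1) /\ c i <> c i.+1.
  have [[x0 Dx0] _] := filtD.
  have [c [_ incr]] := chains h.+1 x0 Dx0.
  by have := heightP c h.+1 incr; rewrite ltnn.
elim: k m => [|k IH] m Dm; first by exists (fun=> m).
have [z [Dz [lezm neqzm]]] := filtered_strictly_below filtD Dm (no_minD m Dm).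
have [c [ckz incr]] := IH z Dz.
exists (fun i => if i <= k then c i else m); split; first by rewrite ltnn.
move=> i; rewrite ltnS; case: ltngtP => // [ltik _ | -> _]; first exact: incr.
by rewrite ckz.
Qed.

End Filtered.

Section Product.
Context {I : Type} {F : I -> Type} {le : forall i, F i -> F i -> Prop}.

Lemma pi_partial_order : (forall i, partial_order (le i)) -> partial_order (pi_le le).
Proof.
move=> po; split=> [x i | ]; first by case: (po i).
split=> [x y lexy leyx | x y z lexy leyz i].
- by apply: functional_extensionality_dep => i; case: (po i) => _ [anti _]; apply: anti.
- by case: (po i) => _ [_ trans]; apply: trans (lexy i) (leyz i).
Qed.

Lemma is_sup_pi (D : (forall i, F i) -> Prop) s :
  (forall i, is_sup (le i) (img (fun x => x i) D) (s i)) -> is_sup (pi_le le) D s.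
Proof.
move=> sups; split=> [x Dx i | u ubu i].
  by case: (sups i) => ub _; apply: ub; exists x.
by case: (sups i) => _ least; apply: least => _ [x [Dx ->]]; apply: ubu.
Qed.

Hypothesis cl : forall i, complete_lattice (le i).

Let proj_sup (D : (forall i, F i) -> Prop) i : F i :=
  proj1_sig (constructive_indefinite_description _
    ((cl i).2 (img (fun x => x i) D))).

Let proj_supP D i : is_sup (le i) (img (fun x => x i) D) (proj_sup D i).
Proof. exact: proj2_sig (constructive_indefinite_description _ _). Qed.

Lemma pi_complete_lattice : complete_lattice (pi_le le).
Proof.
split; first by apply: pi_partial_order => i; case: (cl i).
by move=> D; exists (proj_sup D); apply: is_sup_pi => i; apply: proj_supP.
Qed.

Lemma is_sup_proj D s i :
  is_sup (pi_le le) D s -> is_sup (le i) (img (fun x => x i) D) (s i).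
Proof.
move=> supD; have <- : proj_sup D = s.
  apply: is_sup_unique pi_complete_lattice.1 _ supD.
  by apply: is_sup_pi => j; apply: proj_supP.
exact: proj_supP.
Qed.

Lemma scott_continuous_proj i : scott_continuous (pi_le le) (le i) (fun x => x i).
Proof. by move=> D s _; apply: is_sup_proj. Qed.

End Product.

Section ProductMaps.
Context {A : Type} {leA : A -> A -> Prop}.

Lemma scott_continuous_tuple {I : Type} {F : I -> Type}
    {le : forall i, F i -> F i -> Prop} (f : forall i, A -> F i) :
  (forall i, scott_continuous leA (le i) (f i)) ->
  scott_continuous leA (pi_le le) (fun a i => f i a).
Proof.
move=> f_sc D s dirD supD; apply: is_sup_pi => i.
apply: (is_sup_ext (f_sc i _ _ dirD supD)) => y; split.
- by move=> [a [Da ->]]; exists (fun j => f j a); split=> //; exists a.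
- by move=> [_ [[a [Da ->]] ->]]; exists a.
Qed.

Lemma scott_continuous_pair_const {B C : Type} {leB : B -> B -> Prop}
    {leC : C -> C -> Prop} {b : B} {f : A -> C} :
  leB b b -> scott_continuous leA leC f ->
  scott_continuous leA (pair_le leB leC) (fun a => (b, f a)).
Proof.
move=> lebb f_sc D s dirD supD; have [[a0 Da0] _] := dirD.
have [ubf leastf] := f_sc _ _ dirD supD.
split=> [_ [a [Da ->]] | [b' c] ubu]; first by split=> //; apply: ubf; exists a.
split; first exact: (ubu (b, f a0) (ex_intro _ a0 (conj Da0 erefl))).1.
by apply: leastf => _ [a [Da ->]]; apply: (ubu (b, f a) _).2; exists a.
Qed.

End ProductMaps.

Section FiniteProduct.
Context {I : finType} {F : I -> Type} {le : forall i, F i -> F i -> Prop}.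

Lemma pi_finite_height_filtered_min {D : (forall i, F i) -> Prop} :
  (forall i, partial_order (le i)) -> (forall i, finite_height (le i)) ->
  filtered (pi_le le) D -> exists m, D m /\ forall x, D x -> pi_le le m x.
Proof.
move=> po fh filtD.
suff [m [Dm minm]] : exists m, D m /\ forall i y, D y -> le i (m i) (y i).
  by exists m; split=> // y Dy i; apply: minm.
apply: (filtered_exists_forall filtD) => [i x z lezx minx y Dy | i].
  by have [_ [_ trans]] := po i; apply: trans (lezx i) (minx y Dy).
have proj_mono : monotone (dual (pi_le le)) (dual (le i)) (fun x => x i).
  by move=> x y lexy; apply: lexy.
have [_ [[x [Dx ->]] minxi]] :=
  finite_height_filtered_min (fh i) (directed_img proj_mono filtD).
by exists x; split=> // y Dy; apply: minxi; exists y.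
Qed.

End FiniteProduct.

Section RealSequences.
Open Scope R_scope.

Lemma Un_cv_lb (u : nat -> R) c l : (forall n, c <= u n) -> Un_cv u l -> c <= l.
Proof.
move=> ub cvu; apply: Rnot_lt_le => ltlc.
have [n0 close] := cvu (c - l) ltac:(lra).
have := close n0 (le_n n0); have := ub n0; rewrite /Rdist.
by move: (Rle_abs (u n0 - l)); lra.
Qed.

Lemma Un_cv_squeeze_inv (u : nat -> R) l :
  (forall n, l <= u n < l + / (INR n + 1)) -> Un_cv u l.
Proof.
move=> bnd eps eps_gt0; have [n0 small] := RinvN_cv eps_gt0.
exists n0 => n len; move: (small n len) (bnd n); rewrite /RinvN /Rdist /= Rminus_0_r.
move=> small_n [lo hi]; rewrite Rabs_pos_eq; last lra.
by move: (Rle_abs (/ (INR n + 1))); lra.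
Qed.

End RealSequences.

Section BoxChart.
Context {T : Type} {le : T -> T -> Prop} {k : nat}.
Context {phi : T -> 'I_k -> R} {a b : 'I_k -> R}.
Hypothesis chart : box_chart le k phi a b.

Lemma box_chart_le {x y} i : le x y -> (phi x i <= phi y i)%R.
Proof. by move=> lexy; apply: (chart.1 x y).1. Qed.

Lemma box_chart_inf_approx {A : T -> Prop} {s : T} i eps :
  (exists x, A x) -> is_inf le A s -> (0 < eps)%R ->
  exists x, A x /\ (phi x i < phi s i + eps)%R.
Proof.
move=> [x0 Ax0] [lbs gls] eps_gt0; apply: NNPP => no_close.
have far x : A x -> (phi s i + eps <= phi x i)%R.
  by move=> Ax; apply: Rnot_lt_le => close; apply: no_close; exists x.
(* raising coordinate [i] of [s] by [eps] stays in the box and below [A],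
   contradicting [s = inf A] *)
pose z j := if j == i then (phi s i + eps)%R else phi s j.
have z_box j : (a j <= z j <= b j)%R.
  rewrite /z; case: eqP => [->|_]; last exact: chart.2.1.
  have := chart.2.1 s i; have := chart.2.1 x0 i; have := far _ Ax0; lra.
have [y yE] := chart.2.2 z z_box.
have leys : le y s.
  apply: gls => x Ax; apply/(chart.1 y x) => j; rewrite yE /z; case: eqP => [->|_].
  - exact: far.
  - exact: box_chart_le (lbs x Ax).
by have := box_chart_le i leys; rewrite yE /z eqxx; lra.
Qed.

Lemma box_chart_le_lim {l : T} {u : nat -> T} {x : T} :
  (forall n, le l (u n)) -> (forall i, Un_cv (fun n => phi (u n) i) (phi x i)) -> le l x.
Proof.
move=> lelu cvu; apply/(chart.1 l x) => i.
exact: Un_cv_lb (fun n => box_chart_le i (lelu n)) (cvu i).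
Qed.

End BoxChart.

Section Network.
Variable N : network.

Lemma leX_partial_order v : partial_order (leX N v).
Proof. exact: (X_dcpo N v).1. Qed.

Lemma leX_refl v (x : X N v) : leX N v x x.
Proof. by case: (leX_partial_order v). Qed.

Lemma leGP_partial_order : partial_order (leGP N).
Proof. exact: pi_partial_order leX_partial_order. Qed.

Lemma clearing_projectionP x : clearing_projection N x <-> Phi N x = x.
Proof.
split=> [[pe [hd [ha [hdE [peE [haE alphaE]]]]]] | fixx].
  apply: functional_extensionality_dep => v; rewrite -alphaE; congr (alpha _ _).
  by apply: functional_extensionality_dep => e; rewrite haE -peE hdE.
exists (fun e => delta N e (x (src N e))), x,
  (fun v (e : {e : E N | tgt N e == v}) => delta N (proj1_sig e) (x (src N (proj1_sig e)))).
by do 3!split=> //; move=> v; rewrite -{2}fixx.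
Qed.

Hypothesis cl : forall v, complete_lattice (leX N v).

Lemma Phi_scott_continuous : scott_continuous (leGP N) (leGP N) (Phi N).
Proof.
have refl : forall x : PP N, leGP N x x by move=> x v; apply: leX_refl.
(* Phi = < ahat_v o (iota_v, < delta_e o proj_(src e) >_(tgt e = v)) >_v *)
apply: (scott_continuous_tuple (fun v (x : PP N) => ahat N v (Defs.iota N v,
  fun e : {e | tgt N e == v} => delta N (proj1_sig e) (x (src N (proj1_sig e)))))) => v.
apply: (scott_continuous_comp refl
  (scott_continuous_pair_const (leX_refl _ _) _) (ahat_sc N v)).
apply: (scott_continuous_tuple
  (fun e (x : PP N) => delta N (proj1_sig e) (x (src N (proj1_sig e))))) => e.
exact: scott_continuous_comp refl (scott_continuous_proj cl _) (delta_sc N _).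
Qed.

Lemma Phi_monotone : monotone (leGP N) (leGP N) (Phi N).
Proof. exact: scott_continuous_monotone leGP_partial_order.1 Phi_scott_continuous. Qed.

Lemma least_clearing_iterates bot xmin :
  (forall x, leGP N bot x) -> is_least_clearing N xmin ->
  is_sup (leGP N) (iterates N bot) xmin.
Proof.
move=> botP [clx leastx].
apply: (kleene_least_fixpoint (complete_lattice_dcpo (pi_complete_lattice cl))
  Phi_scott_continuous botP).
- exact/clearing_projectionP.
- by move=> y /clearing_projectionP; apply: leastx.
Qed.

Lemma greatest_clearing_iterates top xmax :
  preserves_filtered_infs (leGP N) (leGP N) (Phi N) ->
  (forall x, leGP N x top) -> is_greatest_clearing N xmax ->
  is_inf (leGP N) (iterates N top) xmax.
Proof.
move=> Phi_infs topP [clx greatestx].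
apply: (kleene_least_fixpoint
  (complete_lattice_dcpo (complete_lattice_dual (pi_complete_lattice cl))) Phi_infs topP).
- exact/clearing_projectionP.
- by move=> y /clearing_projectionP; apply: greatestx.
Qed.

Lemma Phi_preserves_filtered_infs_finite_height :
  (forall v, finite_height (leX N v)) ->
  preserves_filtered_infs (leGP N) (leGP N) (Phi N).
Proof.
move=> fh D s filtD infD.
have [m [Dm minm]] := pi_finite_height_filtered_min leX_partial_order fh filtD.
exact: is_inf_img_min leGP_partial_order Phi_monotone Dm minm infD.
Qed.

Lemma is_inf_proj {D s} v :
  is_inf (leGP N) D s -> is_inf (leX N v) (img (fun x => x v) D) (s v).
Proof. exact: is_sup_proj (fun v => complete_lattice_dual (cl v)) D s v. Qed.

Section RealBox.
Variables (k : V N -> nat) (phi : forall v, X N v -> 'I_(k v) -> R).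
Variables (a b : forall v, 'I_(k v) -> R).
Hypothesis chart : forall v, box_chart (leX N v) (k v) (phi v) (a v) (b v).
Hypothesis delta_cv : forall e (u : nat -> X N (src N e)) (x : X N (src N e)),
  (forall i, Un_cv (fun n => phi _ (u n) i) (phi _ x i)) ->
  forall j, Un_cv (fun n => phi _ (proj1_sig (delta N e (u n))) j)
                  (phi _ (proj1_sig (delta N e x)) j).
Hypothesis alpha_cv : forall v (u : nat -> inprod N v) (p : inprod N v),
  (forall (e : {e : E N | tgt N e == v}) i,
     Un_cv (fun n => phi _ (proj1_sig (u n e)) i) (phi _ (proj1_sig (p e)) i)) ->
  forall j, Un_cv (fun n => phi v (alpha N v (u n)) j) (phi v (alpha N v p) j).

Lemma Phi_cv {u : nat -> PP N} {x : PP N} :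
  (forall v i, Un_cv (fun n => phi v (u n v) i) (phi v (x v) i)) ->
  forall v j, Un_cv (fun n => phi v (Phi N (u n) v) j) (phi v (Phi N x v) j).
Proof. by move=> cvu v; apply: alpha_cv => e; apply: delta_cv. Qed.

Lemma filtered_inf_cv_seq {D s} :
  filtered (leGP N) D -> is_inf (leGP N) D s ->
  exists d : nat -> PP N, (forall n, D (d n)) /\
    forall v i, Un_cv (fun n => phi v (d n v) i) (phi v (s v) i).
Proof.
move=> filtD infD.
have close n : exists d, D d /\ forall vi : {v : V N & 'I_(k v)},
    (phi _ (d (tag vi)) (tagged vi) < phi _ (s (tag vi)) (tagged vi) + / (INR n + 1))%R.
  apply: (filtered_exists_forall filtD) => [[v i] x z lezx /= | [v i] /=].
    by have := box_chart_le (chart v) i (lezx v); lra.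
  have [[x0 Dx0] _] := filtD.
  have inv_gt0 : (0 < / (INR n + 1))%R by apply: Rinv_0_lt_compat; move: (pos_INR n); lra.
  have [_ [[x [Dx ->]] closex]] :=
    box_chart_inf_approx (chart v) i _ (ex_intro _ (x0 v) (ex_intro _ x0 (conj Dx0 erefl)))
      (is_inf_proj v infD) inv_gt0.
  by exists x.
have [d dP] := choice _ close.
exists d; split=> [n | v i]; first by case: (dP n).
apply: Un_cv_squeeze_inv => n; have [Ddn dn_close] := dP n.
split; last exact: (dn_close (existT _ v i)).
exact: (box_chart_le (chart v) i (infD.1 _ Ddn v)).
Qed.

Lemma Phi_preserves_filtered_infs_box :
  preserves_filtered_infs (leGP N) (leGP N) (Phi N).
Proof.
move=> D s filtD infD; have [d [Dd cvd]] := filtered_inf_cv_seq filtD infD.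
split=> [_ [x [Dx ->]] | l lbl v]; first by apply: Phi_monotone; apply: infD.1.
apply: (box_chart_le_lim (chart v) _ (Phi_cv cvd v)) => n.
by apply: lbl; exists (d n).
Qed.

End RealBox.

End Network.

Theorem mainTheorem7 (N : network)
  (Hcl : forall v : V N, complete_lattice (leX N v)) :
  (* Phi_* is Scott-continuous *)
  scott_continuous (leGP N) (leGP N) (Phi N) /\
  (* x_min = sup_n Phi_*^n(bot) *)
  (forall bot xmin : PP N,
     (forall x, leGP N bot x) -> is_least_clearing N xmin ->
     is_sup (leGP N) (iterates N bot) xmin) /\
  (* if Phi_* preserves filtered infima, x_max = inf_n Phi_*^n(top) *)
  (preserves_filtered_infs (leGP N) (leGP N) (Phi N) ->
   forall top xmax : PP N,
     (forall x, leGP N x top) -> is_greatest_clearing N xmax ->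
     is_inf (leGP N) (iterates N top) xmax) /\
  (* ... which holds when every X_v has finite height *)
  ((forall v : V N, finite_height (leX N v)) ->
   preserves_filtered_infs (leGP N) (leGP N) (Phi N)) /\
  (* ... or in the Euclidean compact-interval case *)
  (real_box_case N -> preserves_filtered_infs (leGP N) (leGP N) (Phi N)).
Proof.
split; first exact: Phi_scott_continuous.
split; first exact: least_clearing_iterates.
split; first by move=> Phi_infs top xmax; apply: greatest_clearing_iterates.
split; first exact: Phi_preserves_filtered_infs_finite_height.
move=> [k [phi [a [b [chart [delta_cv alpha_cv]]]]]].
exact: Phi_preserves_filtered_infs_box chart delta_cv alpha_cv.
Qed.
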